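(* Fix a horizon $T\ge 1$. Consider a discrete-time system with control inputs $u=(u_0,\dots,u_{T-1})$, exogenous inputs $\delta=(\delta_0,\dots,\delta_T)$, and state $x_t=(x^{\rm aff}_t,x^{\rm cvx}_t)$, $t=0,\dots,T$, where the initial state is $x_0=f_0(\delta_0)$ for some mapping $f_0$, and for $t=1,\dots,T$ \[ x^{\rm aff}_t = A_t(\delta_t)x^{\rm aff}_{t-1}+B_t(\delta_t)u_{t-1}+w_t(\delta_t),\qquad x^{\rm cvx}_t = h_t(x^{\rm aff}_{t-1},x^{\rm cvx}_{t-1},u_{t-1},\delta_t), \] with $A_t(\delta_t),B_t(\delta_t)$ matrices, $w_t(\delta_t)$ vectors and $h_t$ vector-valued mappings. Let $x=\phi(u,\delta)$ denote the resulting state trajectory $(x_0,\dots,x_T)$, obtained by iterating the dynamics. Let $c_0,\dots,c_J$ be scalar-valued functions $c_j(x,u,\delta)$ that are convex in $(x,u)$ for every $\delta$. Suppose that for every $\delta$: (1) for $t=1,\dots,T$, each component (row) of $h_t$ is (a) jointly convex in $(x^{\rm aff}_{t-1},x^{\rm cvx}_{t-1},u_{t-1})$ and (b) nondecreasing in each element of $x^{\rm cvx}_{t-1}$; (2) for $j=0,\dots,J$, the function $(x^{\rm aff},x^{\rm cvx},u)\mapsto c_j((x^{\rm aff},x^{\rm cvx}),u,\delta)$ is nondecreasing in each element of $x^{\rm cvx}=(x^{\rm cvx}_0,\dots,x^{\rm cvx}_T)$. Then the system is a convex system, i.e., for every $\delta$ and every $j=0,\dots,J$, the function $u\mapsto c_j(\phi(u,\delta),u,\delta)$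 is convex.
   Context: Here $c_0$ plays the role of a cost and $c_1,\dots,c_J$ of constraint functions ($c_j\le 0$). A system with dynamics giving input-state map $\phi$, cost $c_0$ and constraints $c_1,\dots,c_J$ is called a convex system if $u\mapsto c_j(\phi(u,\delta),u,\delta)$ is convex for all $\delta$ and all $j=0,\dots,J$. The trajectory notation $x^{\rm aff}=(x^{\rm aff}_0,\dots,x^{\rm aff}_T)$ is used; all functions are finite-valued on the relevant domains. *)

From HB Require Import structures.
From mathcomp Require Import all_boot all_order all_algebra.
Set Implicit Arguments. Unset Strict Implicit. Unset Printing Implicit Defensive.
Import Order.TTheory GRing.Theory Num.Theory.
Local Open Scope ring_scope.

Section Defs.
Variable R : realFieldType.

Definition vmix (n : nat) (a : R) (x y : 'cV[R]_n) : 'cV[R]_n :=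
  a *: x + (1 - a) *: y.

Definition fmix (I : Type) (n : nat) (a : R) (x y : I -> 'cV[R]_n) : I -> 'cV[R]_n :=
  fun i => vmix a (x i) (y i).

Definition incr_at (n : nat) (k : 'I_n) (x x' : 'cV[R]_n) : Prop :=
  x k 0 <= x' k 0 /\ forall i : 'I_n, i != k -> x' i 0 = x i 0.

Definition incr_traj_at (T n : nat) (t : 'I_T) (k : 'I_n)
  (x x' : 'I_T -> 'cV[R]_n) : Prop :=
  x t k 0 <= x' t k 0 /\
  forall (s : 'I_T) (i : 'I_n), (s, i) != (t, k) -> x' s i 0 = x s i 0.

Definition ext (T : nat) (X : Type) (d : X) (u : 'I_T -> X) (s : nat) : X :=
  oapp u d (insub s).

Fixpoint traj (T na nc m : nat) (D : Type)
  (f0 : D -> 'cV[R]_na * 'cV[R]_nc)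
  (A : nat -> D -> 'M[R]_(na, na)) (B : nat -> D -> 'M[R]_(na, m))
  (w : nat -> D -> 'cV[R]_na)
  (h : nat -> 'cV[R]_na -> 'cV[R]_nc -> 'cV[R]_m -> D -> 'cV[R]_nc)
  (u : 'I_T -> 'cV[R]_m) (delta : 'I_T.+1 -> D) (t : nat)
  : 'cV[R]_na * 'cV[R]_nc :=
  let dl := ext (delta ord0) delta in
  let ul := ext 0 u in
  match t with
  | 0 => f0 (dl 0%N)
  | s.+1 =>
      let xs := traj f0 A B w h u delta s in
      (A s.+1 (dl s.+1) *m xs.1 + B s.+1 (dl s.+1) *m ul s + w s.+1 (dl s.+1),
       h s.+1 xs.1 xs.2 (ul s) (dl s.+1))
  end.

Definition phi_aff T na nc m D f0 A B w h u delta : 'I_T.+1 -> 'cV[R]_na :=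
  fun t => (@traj T na nc m D f0 A B w h u delta t).1.
Definition phi_cvx T na nc m D f0 A B w h u delta : 'I_T.+1 -> 'cV[R]_nc :=
  fun t => (@traj T na nc m D f0 A B w h u delta t).2.

End Defs.

From HB Require Import structures.
From mathcomp Require Import all_boot all_order all_algebra.
Import Order.TTheory GRing.Theory Num.Theory.
Local Open Scope ring_scope.

From Stdlib Require Import FunctionalExtensionality.
Set Implicit Arguments. Unset Strict Implicit. Unset Printing Implicit Defensive.

(* The affine part of the state depends affinely on the input, so the state
   trajectory of a mixed input mixes the affine parts exactly.  For the convex
   part, induction on t shows that it lies componentwise below the mixture of
   the two convex parts: h_t is nondecreasing in x^cvx_{t-1}, so the inductive
   bound may be fed into h_t, after which convexity of h_t applies.  The same
   two steps, monotonicity and then convexity, applied to c_j give the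
   convexity of u |-> c_j(phi(u, delta), u, delta). *)

Section CoordinatewiseMonotone.
Variables (I : finType) (d d' : Order.disp_t).
Variables (X : porderType d) (Y : porderType d') (F : (I -> X) -> Y).

Hypothesis F_incr : forall k (x x' : I -> X), (x k <= x' k)%O ->
  (forall i, i != k -> x' i = x i) -> (F x <= F x')%O.

Lemma coordinatewise_mono (x y : I -> X) :
  (forall i, x i <= y i)%O -> (F x <= F y)%O.
Proof.
move=> le_xy.
pose z p i := if (enum_rank i < p)%N then y i else x i.
have z0 : z 0%N = x by apply: functional_extensionality => i; rewrite /z ltn0.
have zI : z #|I| = y.
  by apply: functional_extensionality => i; rewrite /z ltn_ord.
suff le_xz p : (p <= #|I|)%N -> (F x <= F (z p))%O by rewrite -zI le_xz.
elim: p => [|p IHp] lt_pI; first by rewrite z0.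
apply: le_trans (IHp (ltnW lt_pI)) _.
pose k := enum_val (Ordinal lt_pI).
have rank_k : enum_rank k = p :> nat by rewrite enum_valK.
apply: (F_incr (k := k)); first by rewrite /z rank_k ltnn ltnSn.
move=> i neq_ik; rewrite /z ltnS leq_eqVlt.
suff -> : (enum_rank i == p :> nat) = false by [].
by apply: contraNF neq_ik; rewrite -rank_k => /eqP/val_inj/enum_rank_inj ->.
Qed.

End CoordinatewiseMonotone.

Lemma col_entryK (R : Type) n (x : 'cV[R]_n) : \col_i x i 0 = x.
Proof. by apply/matrixP => i j; rewrite mxE (ord1 j). Qed.

Lemma incr_at_mono (R : realFieldType) n (F : 'cV[R]_n -> R) :
  (forall k x x', incr_at k x x' -> F x <= F x') ->
  forall x y : 'cV[R]_n, (forall i, x i 0 <= y i 0) -> F x <= F y.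
Proof.
move=> F_incr x y le_xy; rewrite -(col_entryK x) -(col_entryK y).
apply: (coordinatewise_mono (F := fun g => F (\col_i g i))) => //.
move=> k g g' le_k eq_g.
by apply: F_incr; split=> [|i /eq_g]; rewrite !mxE.
Qed.

Lemma incr_traj_at_mono (R : realFieldType) N n
    (F : ('I_N -> 'cV[R]_n) -> R) :
  (forall t k x x', incr_traj_at t k x x' -> F x <= F x') ->
  forall x y : 'I_N -> 'cV[R]_n,
    (forall t i, x t i 0 <= y t i 0) -> F x <= F y.
Proof.
move=> F_incr x y le_xy.
have colK (z : 'I_N -> 'cV[R]_n) : (fun t => \col_i z t i 0) = z.
  by apply: functional_extensionality => t; exact: col_entryK.
rewrite -(colK x) -(colK y).
pose G (g : 'I_N * 'I_n -> R) := F (fun t => \col_i g (t, i)).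
have G_incr k g g' :
    g k <= g' k -> (forall p, p != k -> g' p = g p) -> G g <= G g'.
  case: k => t k le_k eq_g; apply: (F_incr t k).
  by split=> [|s i /eq_g]; rewrite !mxE.
apply: (coordinatewise_mono G_incr
  (x := fun p => x p.1 p.2 0) (y := fun p => y p.1 p.2 0)).
by case=> t i; exact: le_xy.
Qed.

Section Mixtures.
Variable R : realFieldType.

Lemma vmixxx n (a : R) (v : 'cV[R]_n) : vmix a v v = v.
Proof. by rewrite /vmix -scalerDl addrC subrK scale1r. Qed.

Lemma vmixD n (a : R) (x y x' y' : 'cV[R]_n) :
  vmix a x y + vmix a x' y' = vmix a (x + x') (y + y').
Proof. by rewrite /vmix !scalerDr addrACA. Qed.

Lemma mulmx_vmix p n (a : R) (M : 'M[R]_(p, n)) (x y : 'cV[R]_n) :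
  M *m vmix a x y = vmix a (M *m x) (M *m y).
Proof. by rewrite /vmix mulmxDr -!scalemxAr. Qed.

Lemma ext_fmix T n (a : R) (u1 u2 : 'I_T -> 'cV[R]_n) s :
  ext 0 (fmix a u1 u2) s = vmix a (ext 0 u1 s) (ext 0 u2 s).
Proof. by rewrite /ext; case: insubP => //= _; rewrite /vmix !scaler0 addr0. Qed.

End Mixtures.

Section ConvexSystem.
Variables (R : realFieldType) (T na nc m : nat) (D : Type).
Variable f0 : D -> 'cV[R]_na * 'cV[R]_nc.
Variables (A : nat -> D -> 'M[R]_(na, na)) (B : nat -> D -> 'M[R]_(na, m)).
Variable w : nat -> D -> 'cV[R]_na.
Variable h : nat -> 'cV[R]_na -> 'cV[R]_nc -> 'cV[R]_m -> D -> 'cV[R]_nc.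
Variables (delta : 'I_T.+1 -> D) (a : R) (u1 u2 : 'I_T -> 'cV[R]_m).

Let x := traj f0 A B w h (fmix a u1 u2) delta.
Let x1 := traj f0 A B w h u1 delta.
Let x2 := traj f0 A B w h u2 delta.

Lemma traj_aff_fmix t : (x t).1 = vmix a (x1 t).1 (x2 t).1.
Proof.
elim: t => [|t IHt]; first by rewrite /x /x1 /x2 /= vmixxx.
rewrite /x /x1 /x2 /= -/x -/x1 -/x2 IHt ext_fmix !mulmx_vmix.
by rewrite -{1}(vmixxx a (w _ _)) !vmixD.
Qed.

Hypothesis h_cvx : forall (t : nat) (d : D) (i : 'I_nc) (a : R)
  (xa1 xa2 : 'cV[R]_na) (xc1 xc2 : 'cV[R]_nc) (u1 u2 : 'cV[R]_m),
  (1 <= t <= T)%N -> 0 <= a <= 1 ->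
  h t (vmix a xa1 xa2) (vmix a xc1 xc2) (vmix a u1 u2) d i 0
    <= a * h t xa1 xc1 u1 d i 0 + (1 - a) * h t xa2 xc2 u2 d i 0.

Hypothesis h_mono : forall (t : nat) (d : D) (i k : 'I_nc)
  (xa : 'cV[R]_na) (xc xc' : 'cV[R]_nc) (u : 'cV[R]_m),
  (1 <= t <= T)%N -> incr_at k xc xc' ->
  h t xa xc u d i 0 <= h t xa xc' u d i 0.

Hypothesis a01 : 0 <= a <= 1.

Lemma traj_cvx_le_fmix t : (t <= T)%N ->
  forall i, (x t).2 i 0 <= vmix a (x1 t).2 (x2 t).2 i 0.
Proof.
elim: t => [|t IHt] le_tT i; first by rewrite /x /x1 /x2 /= vmixxx.
have t_range : (1 <= t.+1 <= T)%N by rewrite le_tT.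
rewrite /x /x1 /x2 /= -/x -/x1 -/x2 traj_aff_fmix ext_fmix.
rewrite [in leRHS]/vmix !mxE.
apply: le_trans (h_cvx _ _ _ _ _ _ _ _ t_range a01).
apply: (incr_at_mono (F := fun xc => h t.+1 _ xc _ _ i 0)).
  by move=> k xc xc' /(h_mono _ _ _ _ t_range).
exact: IHt (ltnW le_tT).
Qed.

End ConvexSystem.

Theorem theorem1 (R : realFieldType) (T na nc m J : nat) (D : Type)
  (hT : (1 <= T)%N)
  (f0 : D -> 'cV[R]_na * 'cV[R]_nc)
  (A : nat -> D -> 'M[R]_(na, na)) (B : nat -> D -> 'M[R]_(na, m))
  (w : nat -> D -> 'cV[R]_na)
  (h : nat -> 'cV[R]_na -> 'cV[R]_nc -> 'cV[R]_m -> D -> 'cV[R]_nc)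
  (c : 'I_J.+1 -> ('I_T.+1 -> 'cV[R]_na) -> ('I_T.+1 -> 'cV[R]_nc) ->
         ('I_T -> 'cV[R]_m) -> ('I_T.+1 -> D) -> R)
  (* each c_j is jointly convex in (x, u) = ((x^aff, x^cvx), u) for every delta *)
  (c_cvx : forall (j : 'I_J.+1) (delta : 'I_T.+1 -> D) (a : R)
     (xa1 xa2 : 'I_T.+1 -> 'cV[R]_na) (xc1 xc2 : 'I_T.+1 -> 'cV[R]_nc)
     (u1 u2 : 'I_T -> 'cV[R]_m),
     0 <= a <= 1 ->
     c j (fmix a xa1 xa2) (fmix a xc1 xc2) (fmix a u1 u2) delta
       <= a * c j xa1 xc1 u1 delta + (1 - a) * c j xa2 xc2 u2 delta)
  (* (1a) each row of h_t is jointly convex in (x^aff_{t-1}, x^cvx_{t-1}, u_{t-1}) *)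
  (h_cvx : forall (t : nat) (d : D) (i : 'I_nc) (a : R)
     (xa1 xa2 : 'cV[R]_na) (xc1 xc2 : 'cV[R]_nc) (u1 u2 : 'cV[R]_m),
     (1 <= t <= T)%N -> 0 <= a <= 1 ->
     h t (vmix a xa1 xa2) (vmix a xc1 xc2) (vmix a u1 u2) d i 0
       <= a * h t xa1 xc1 u1 d i 0 + (1 - a) * h t xa2 xc2 u2 d i 0)
  (* (1b) each row of h_t is nondecreasing in each element of x^cvx_{t-1} *)
  (h_mono : forall (t : nat) (d : D) (i k : 'I_nc)
     (xa : 'cV[R]_na) (xc xc' : 'cV[R]_nc) (u : 'cV[R]_m),
     (1 <= t <= T)%N -> incr_at k xc xc' ->
     h t xa xc u d i 0 <= h t xa xc' u d i 0)
  (* (2) each c_j is nondecreasing in each element of x^cvx = (x^cvx_0..x^cvx_T) *)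
  (c_mono : forall (j : 'I_J.+1) (delta : 'I_T.+1 -> D) (t : 'I_T.+1) (k : 'I_nc)
     (xa : 'I_T.+1 -> 'cV[R]_na) (xc xc' : 'I_T.+1 -> 'cV[R]_nc)
     (u : 'I_T -> 'cV[R]_m),
     incr_traj_at t k xc xc' -> c j xa xc u delta <= c j xa xc' u delta) :
  (* conclusion: convex system, u |-> c_j(phi(u, delta), u, delta) is convex *)
  forall (delta : 'I_T.+1 -> D) (j : 'I_J.+1) (a : R) (u1 u2 : 'I_T -> 'cV[R]_m),
    0 <= a <= 1 ->
    c j (phi_aff f0 A B w h (fmix a u1 u2) delta)
        (phi_cvx f0 A B w h (fmix a u1 u2) delta) (fmix a u1 u2) delta
    <= a * c j (phi_aff f0 A B w h u1 delta) (phi_cvx f0 A B w h u1 delta) u1 delta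
       + (1 - a) * c j (phi_aff f0 A B w h u2 delta) (phi_cvx f0 A B w h u2 delta) u2 delta.
Proof.
move=> delta j a u1 u2 a01.
have -> : phi_aff f0 A B w h (fmix a u1 u2) delta =
    fmix a (phi_aff f0 A B w h u1 delta) (phi_aff f0 A B w h u2 delta).
  by apply: functional_extensionality => t; exact: traj_aff_fmix.
apply: le_trans (c_cvx _ _ _ _ _ _ _ _ _ a01).
apply: (incr_traj_at_mono (F := fun xc => c j _ xc _ delta)).
  by move=> t k xc xc'; exact: c_mono.
move=> t i.
exact: (traj_cvx_le_fmix f0 A B w delta u1 u2 h_cvx h_mono a01 (ltn_ord t)).
Qed.
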